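(* Let $p$ be a prime, $G$ a Hausdorff topological group, and suppose $\gamma\in G$ has a topological $p$-Jordan decomposition $\gamma=\gamma_{ts}\gamma_{tu}$. Then: (1) if $\gamma=\gamma'_{ts}\gamma'_{tu}$ is also a topological $p$-Jordan decomposition, then $\gamma_{ts}=\gamma'_{ts}$ and $\gamma_{tu}=\gamma'_{tu}$; (2) the closure of the subgroup generated by $\gamma$ contains $\gamma_{ts}$ and $\gamma_{tu}$; (3) if $G'$ is another Hausdorff topological group and $f:G\to G'$ is a continuous homomorphism, then $f(\gamma)=f(\gamma_{ts})f(\gamma_{tu})$ is a topological $p$-Jordan decomposition; (4) for $g\in G$, $g\gamma g^{-1}=(g\gamma_{ts}g^{-1})(g\gamma_{tu}g^{-1})$ is a topological $p$-Jordan decomposition.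
   Context: An element $\gamma$ of a topological group is absolutely $p$-semisimple if it has finite order coprime to $p$, and topologically $p$-unipotent if $\lim_{n\to\infty}\gamma^{p^n}=1$. A topological $p$-Jordan decomposition of $\gamma$ is a pair of commuting elements $(\gamma_{ts},\gamma_{tu})$ with $\gamma=\gamma_{ts}\gamma_{tu}$, $\gamma_{ts}$ absolutely $p$-semisimple and $\gamma_{tu}$ topologically $p$-unipotent. *)

From HB Require Import structures.
From mathcomp Require Import all_boot all_order.
From mathcomp Require Import monoid.
From mathcomp Require Import all_classical topology.
Set Implicit Arguments. Unset Strict Implicit. Unset Printing Implicit Defensive.
Local Open Scope group_scope.
Local Open Scope classical_set_scope.

HB.mixin Record isTopologicalGroup G of Group G & Topological G := {
  mulg_continuous : continuous (fun xy : G * G => xy.1 * xy.2);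
  invg_continuous : continuous (fun x : G => x^-1)
}.
#[short(type="topologicalGroupType")]
HB.structure Definition TopologicalGroup :=
  {G of isTopologicalGroup G & Group G & Topological G}.

Definition abs_p_semisimple (p : nat) (G : groupType) (x : G) : Prop :=
  exists n : nat, (0 < n)%N /\ coprime n p /\ x ^+ n = 1.
Definition top_p_unipotent (p : nat) (G : topologicalGroupType) (x : G) : Prop :=
  (fun n : nat => x ^+ (p ^ n)) @ \oo --> (1 : G).
Definition top_p_jordan (p : nat) (G : topologicalGroupType) (g s u : G) : Prop :=
  [/\ g = s * u, commute s u, abs_p_semisimple p s & top_p_unipotent p u].
Definition cyclic_subgroup (G : groupType) (g : G) : set G :=
  [set x | exists n : nat, x = g ^+ n \/ x = (g ^+ n)^-1].

(* Raising the decomposition g = s u to the powers p^(M k), where p^M = 1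
   modulo the order n of s (Euler: take M = totient n), fixes s and sends u
   to 1, because s and u commute.  Hence s = lim g^(p^(M k)) and
   u = lim g (g^(p^(M k)))^-1 are determined by g and lie in the closure of
   the cyclic subgroup generated by g.  Continuous homomorphisms preserve
   commutation, finite order and limits, so they preserve the decomposition;
   conjugation is one of them. *)

From HB Require Import structures.
From mathcomp Require Import all_boot all_order.
From mathcomp Require Import monoid.
From mathcomp Require Import all_classical topology.
From mathcomp Require cyclic.
Local Open Scope group_scope.
Local Open Scope classical_set_scope.

Section TopologicalGroupCvg.
Context {G : topologicalGroupType}.

Lemma cvgMg {T : Type} {F : set_system T} {FF : Filter F} {a b : T -> G} {x y : G} :
  a @ F --> x -> b @ F --> y -> (fun t => a t * b t) @ F --> x * y.
Proof.
move=> ax b_y; exact: (@continuous_cvg _ _ _ F FF (fun t => (a t, b t))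
  (fun xy : G * G => xy.1 * xy.2) (x, y) (mulg_continuous (x, y)) (cvg_pair ax b_y)).
Qed.

Lemma cvgVg {T : Type} {F : set_system T} {FF : Filter F} {a : T -> G} {x : G} :
  a @ F --> x -> (fun t => (a t)^-1) @ F --> x^-1.
Proof. exact: (@continuous_cvg _ _ _ F FF a (fun x : G => x^-1) x (invg_continuous x)). Qed.

Lemma continuous_conjg_by (h : G) : continuous (fun x : G => h * x * h^-1).
Proof.
move=> x; apply: cvgMg; last exact: cvg_cst.
by apply: cvgMg; [exact: cvg_cst | exact: cvg_id].
Qed.

Lemma cvg_closure {A : set G} {a : nat -> G} {x : G} :
  (forall k, A (a k)) -> a @ \oo --> x -> closure A x.
Proof.
move=> Aa ax; apply: (closed_cvg _ (@closed_closure _ A) _ _ ax).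
by apply: nearW => k; apply: subset_closure.
Qed.

End TopologicalGroupCvg.

Lemma expg_eq_mod {G : groupType} (x : G) n a b :
  x ^+ n = 1 -> a = b %[mod n] -> x ^+ a = x ^+ b.
Proof.
move=> xn1 eq_ab; rewrite (divn_eq a n) (divn_eq b n) eq_ab !expgnDr.
by rewrite ![(_ * n)%N]mulnC !expgnA xn1 !expg1n.
Qed.

Lemma abs_p_semisimple_fixed {p : nat} {G : groupType} (s : G) :
  abs_p_semisimple p s -> exists2 M, (0 < M)%N & forall k, s ^+ (p ^ (M * k)) = s.
Proof.
case=> n [n_gt0 [coprime_np sn1]]; exists (totient n); first by rewrite totient_gt0.
move=> k; rewrite -[RHS]expg1; apply: (expg_eq_mod _ _ _ _ sn1).
rewrite expnM -modnXm cyclic.Euler_exp_totient 1?coprime_sym //.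
by rewrite modnXm exp1n.
Qed.

Section JordanDecomposition.
Context {p : nat} {G : topologicalGroupType}.

Lemma top_p_jordan_cvg_semisimple {g s u : G} {M : nat} :
  top_p_jordan p g s u -> (0 < M)%N -> (forall k, s ^+ (p ^ (M * k)) = s) ->
  (fun k => g ^+ (p ^ (M * k))) @ \oo --> s.
Proof.
case=> -> su _ u_unip M_gt0 s_fixed.
have -> : (fun k => (s * u) ^+ (p ^ (M * k))) = (fun k => s * u ^+ (p ^ (M * k))).
  by apply: funext => k; rewrite expgMn // s_fixed.
rewrite -[X in _ --> X]mulg1; apply: cvgMg; first exact: cvg_cst.
have M_cvg : (fun k => M * k)%N @ \oo --> \oo by exact: cvg_mulnl.
exact: (cvg_comp _ _ M_cvg u_unip).
Qed.

Lemma top_p_jordan_uniq {g s u s' u' : G} : hausdorff_space G ->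
  top_p_jordan p g s u -> top_p_jordan p g s' u' -> s' = s /\ u' = u.
Proof.
move=> hG J J'; have [g_su _ /abs_p_semisimple_fixed[M M_gt0 s_fixed] _] := J.
have [g_su' _ /abs_p_semisimple_fixed[M' M'_gt0 s'_fixed] _] := J'.
have MM'_gt0 : (0 < M * M')%N by rewrite muln_gt0 M_gt0.
have eq_s : s' = s.
  apply: (cvg_unique hG (top_p_jordan_cvg_semisimple J' MM'_gt0 _)
                        (top_p_jordan_cvg_semisimple J MM'_gt0 _)) => k.
    by rewrite (mulnC M) -mulnA s'_fixed.
  by rewrite -mulnA s_fixed.
split=> //; apply: (@mulgI _ s).
by rewrite -g_su -[in LHS]eq_s -g_su'.
Qed.

Lemma top_p_jordan_closure {g s u : G} : top_p_jordan p g s u ->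
  closure (cyclic_subgroup g) s /\ closure (cyclic_subgroup g) u.
Proof.
move=> J; have [g_su su /abs_p_semisimple_fixed[M M_gt0 s_fixed] _] := J.
have g_cvg := top_p_jordan_cvg_semisimple J M_gt0 s_fixed.
split; first by apply: cvg_closure g_cvg => k; exists (p ^ (M * k))%N; left.
have u_gs : u = g * s^-1 by rewrite g_su su mulgK.
rewrite u_gs; apply: cvg_closure (cvgMg (cvg_cst g) (cvgVg g_cvg)) => k.
case: (p ^ (M * k))%N => [|N]; first by exists 1%N; left; rewrite expg0 invg1 mulg1.
by exists N; right; rewrite expgSr invgM mulgA mulgV mul1g.
Qed.

End JordanDecomposition.

Lemma top_p_jordan_morph {p : nat} {G G' : topologicalGroupType} {g s u : G} (f : G -> G') :
  {morph f : x y / x * y} -> continuous f ->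
  top_p_jordan p g s u -> top_p_jordan p (f g) (f s) (f u).
Proof.
move=> fM f_cont [-> su [n [n_gt0 [coprime_np sn1]]] u_unip].
have f1 : f 1 = 1 by apply: (@mulgI _ (f 1)); rewrite -fM !mulg1.
have fX x k : f (x ^+ k) = f x ^+ k.
  by elim: k => [|k IHk]; rewrite ?f1 // !expgS fM IHk.
split=> //; first by rewrite /commute -!fM su.
  by exists n; rewrite -fX sn1 f1.
rewrite /top_p_unipotent -f1 (_ : (fun k => _) = f \o (fun k => u ^+ (p ^ k))).
  exact: (@continuous_cvg _ _ _ _ _ _ f 1 (f_cont 1) u_unip).
by apply: funext => k; rewrite /= fX.
Qed.

Theorem proposition1p7 (p : nat) (hp : prime p)
  (G : topologicalGroupType) (hG : hausdorff_space G)
  (g s u : G) (J : top_p_jordan p g s u) :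
  [/\ (forall s' u' : G, top_p_jordan p g s' u' -> s' = s /\ u' = u),
      closure (cyclic_subgroup g) s /\ closure (cyclic_subgroup g) u,
      (forall (G' : topologicalGroupType) (f : {multiplicative G -> G'}),
         hausdorff_space G' -> continuous f ->
         top_p_jordan p (f g) (f s) (f u)) &
      (forall h : G, top_p_jordan p (h * g * h^-1) (h * s * h^-1) (h * u * h^-1))].
Proof.
split.
- by move=> s' u' J'; apply: top_p_jordan_uniq hG J J'.
- exact: top_p_jordan_closure J.
- move=> G' f _ f_cont; apply: (top_p_jordan_morph f _ f_cont J).
  exact: gmulfM.
- move=> h; apply: (top_p_jordan_morph _ _ (continuous_conjg_by h) J).
  by move=> x y; rewrite !mulgA mulgVK.
Qed.
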